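(* Let $p$ be an odd prime and $b,c\in\mathbb Z$. For every integer $k$ with $-(p-2)\le k\le p-2$, $$(4c-b^2)\binom{p-2}{k}_{b,c}\equiv\begin{cases}\binom{p-1}{-1}_{b,c}+c\binom{p-1}{1}_{b,c}-b \pmod p & \text{if } k=0,\\[2mm] (k+1)\binom{p-1}{k-1}_{b,c}-(k-1)c\binom{p-1}{k+1}_{b,c}\pmod p & \text{if } 0<|k|\le p-2.\end{cases}$$
   Context: For $n\in\mathbb N$ and $b,c\in\mathbb Z$, the generalized trinomial coefficients $\binom{n}{k}_{b,c}$ ($k\in\mathbb Z$) are the integers defined by the Laurent polynomial identity $\left(x+b+\frac{c}{x}\right)^n=\sum_{k\in\mathbb Z}\binom{n}{k}_{b,c}x^k$; in particular $\binom nk_{b,c}=0$ when $|k|>n$. *)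

From mathcomp Require Import all_boot all_order all_algebra.
Set Implicit Arguments. Unset Strict Implicit. Unset Printing Implicit Defensive.
Import Order.TTheory GRing.Theory Num.Theory.
Local Open Scope ring_scope.

(* Generalized trinomial coefficient  binom(n,k)_{b,c} : the coefficient of
   x^k in the Laurent polynomial (x + b + c/x)^n.  Since
   (x + b + c/x)^n = x^(-n) (x^2 + b x + c)^n, this is the coefficient of
   x^(n+k) in the ordinary polynomial (x^2 + b x + c)^n over int, and 0 when
   n + k < 0 (it is automatically 0 when n + k > 2n, i.e. k > n). *)
Definition gtrinom (b c : int) (n : nat) (k : int) : int :=
  if (0 <= n%:Z + k) then
    (('X^2 + b *: 'X + c%:P : {poly int}) ^+ n)`_(absz (n%:Z + k))
  else 0.

From mathcomp Require Import all_boot all_order all_algebra.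
From mathcomp Require Import finfield ring zify.
Import Order.TTheory GRing.Theory Num.Theory.
Local Open Scope ring_scope.

(* Write P = X^2 + b X + c, n = p - 2, A = P^(p-1) = P^(n+1) and B = P^n, so
   that binom(n,k)_{b,c} and binom(n+1,k)_{b,c} are the coefficients of B and A
   of index n + k and n + 1 + k.  The proof is a polynomial identity followed by
   a comparison of coefficients, carried out in F_p:
   - in any commutative ring in which n + 2 = 0 we have A' = -P' B, from which
       X^2 (X A') + 3 X^2 A - c (X A') + c A = P^(n+2) + (4c - b^2) X^2 B;
     reading the coefficient of X^(j+2) gives a three-term relation between
     the coefficients of A, B and P^(n+2);
   - over F_p the Frobenius map gives P^p = X^(2p) + b X^p + c, whose
     coefficient of X^(j+2) is b when j = n and 0 otherwise (for j <= 2n);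
   - finally the congruence mod p is the corresponding equality in F_p, and
     the trinomial coefficients reduce to coefficients of powers of P.
   The argument does not use that p is odd. *)

Lemma gtrinom_coef {R : comNzRingType} {b c : int} {m : nat} {k : int} {i : nat} :
  m%:Z + k = i%:Z ->
  (gtrinom b c m k)%:~R =
    (('X^2 + (b%:~R : R) *: 'X + (c%:~R)%:P) ^+ m)`_i.
Proof.
move=> mk_i; rewrite /gtrinom mk_i lez_nat /= -(coef_map (intmul 1)) rmorphXn /=.
by rewrite !rmorphD /= map_polyXn map_polyZ map_polyX map_polyC.
Qed.

Lemma coef_X_deriv (R : nzSemiRingType) (A : {poly R}) (m : nat) :
  ('X * A^`())`_m = A`_m *+ m.
Proof.
by rewrite coefXM; case: m => [|m] /=; [rewrite mulr0n | rewrite coef_deriv].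
Qed.

Section TrinomialPowerIdentity.

Variables (R : comNzRingType) (n : nat) (b c : R).
Hypothesis n2_eq0 : n.+2%:R = 0 :> R.

Let P : {poly R} := 'X^2 + b *: 'X + c%:P.

(* Since n + 1 = -1, the derivative of P^(n+1) is -P' P^n. *)
Lemma X_deriv_trinomial_power :
  'X * (P ^+ n.+1)^`() = - (('X *+ 2 + b%:P) * 'X * P ^+ n).
Proof.
have n1_eqN1 : n.+1%:R = - 1 :> {poly R}.
  by apply/eqP; rewrite -subr_eq0 opprK -(natrD _ n.+1 1) addn1 -polyC_natr n2_eq0.
rewrite deriv_exp /= -mulr_natr n1_eqN1 /P !derivE alg_polyC; ring.
Qed.

(* The differential identity satisfied by A = P^(n+1) and B = P^n; note that
   P^(n+2) = P^2 B and A = P B. *)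
Lemma trinomial_power_identity :
  let A := P ^+ n.+1 in let B := P ^+ n in
  'X^2 * ('X * A^`()) + 'X^2 * A *+ 3 - c%:P * ('X * A^`()) + c%:P * A
    = P ^+ n.+2 + (4 * c - b ^+ 2)%:P * ('X^2 * B).
Proof.
move=> A B; rewrite X_deriv_trinomial_power -/B /A !(exprS P) -/B.
rewrite !(rmorphB, rmorphM, rmorphXn, rmorph_nat) /P -!mul_polyC; ring.
Qed.

Lemma trinomial_power_coef (j : nat) :
  (j.+3%:R * (P ^+ n.+1)`_j - j.+1%:R * c * (P ^+ n.+1)`_j.+2 =
    (P ^+ n.+2)`_j.+2 + (4 * c - b ^+ 2) * (P ^+ n)`_j).
Proof.
move: (congr1 (fun q : {poly R} => q`_j.+2) trinomial_power_identity) => /=.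
rewrite !(coefD, coefB, coefMn, coefCM, coefXnM, coefN, coef_X_deriv).
have j2_lt2 : (j.+2 < 2)%N = false by [].
by rewrite j2_lt2 !subSS !subn0 => <-; ring.
Qed.
End TrinomialPowerIdentity.

(* Frobenius over F_p: the p-th power of X^2 + b X + c acts termwise, and
   fixes the constants b and c (Fermat). *)
Lemma trinomial_frobenius (p : nat) (b c : 'F_p) : prime p ->
  ('X^2 + b *: 'X + c%:P) ^+ p = 'X^(p.*2) + b *: 'X^p + c%:P.
Proof.
move=> p_pr.
have pcharP : p \in [pchar {poly 'F_p}] by rewrite pchar_poly; exact: pchar_Fp.
have frobD (x y : {poly 'F_p}) : (x + y) ^+ p = x ^+ p + y ^+ p.
  exact: (pFrobenius_autD_comm pcharP (mulrC x y)).
have fermat (x : 'F_p) : x ^+ p = x by have := expf_card x; rewrite card_Fp.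
by rewrite !frobD -exprM mul2n exprZn -rmorphXn !fermat.
Qed.

(* The relation behind the theorem, in F_p with p = n + 2: here j plays the
   role of n + k, so that k = j + 2 in F_p, and only j = n (i.e. k = 0) sees
   the middle coefficient b of P^p. *)
Lemma trinomial_coef_Fp {p n j : nat} (b c : 'F_p) :
  prime p -> p = n.+2 -> (j <= n.*2)%N ->
  let P := 'X^2 + b *: 'X + c%:P in let k : 'F_p := j.+2%:R in
  (4 * c - b ^+ 2) * (P ^+ n)`_j =
    (k + 1) * (P ^+ n.+1)`_j - (k - 1) * c * (P ^+ n.+1)`_j.+2
    - (if j == n then b else 0).
Proof.
move=> p_pr p_def j_le P k.
have n2_eq0 : n.+2%:R = 0 :> 'F_p by rewrite -p_def; exact: pchar_Fp_0.
have coef_Pp : (P ^+ n.+2)`_j.+2 = if j == n then b else 0.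
  rewrite -p_def trinomial_frobenius // !(coefD, coefZ, coefXn, coefC).
  have -> : (j.+2 == p.*2) = false by apply/negbTE; rewrite p_def; lia.
  have -> : (j.+2 == p) = (j == n) by rewrite p_def eqSS.
  by case: (j == n); rewrite /= ?mulr1 ?mulr0 ?addr0 ?add0r.
have := @trinomial_power_coef _ n b c n2_eq0 j; rewrite coef_Pp => coef_rel.
rewrite -[_ * (P ^+ n)`_j](addKr (if j == n then b else 0)) -coef_rel /k /P; ring.
Qed.

Lemma eqz_mod_Fp (p : nat) (x y : int) : prime p ->
  (x == y %[mod p%:Z])%Z = (x%:~R == y%:~R :> 'F_p).
Proof.
by move=> p_pr; rewrite eqz_mod_dvd (dvdz_pcharf (pchar_Fp p_pr)) rmorphB subr_eq0.
Qed.

Theorem lemma2p1 (p : nat) (b c k : int) :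
  prime p -> odd p ->
  - (p%:Z - 2) <= k <= p%:Z - 2 ->
  ((4 * c - b ^+ 2) * gtrinom b c p.-2 k =
     (if k == 0 then
        gtrinom b c p.-1 (-1) + c * gtrinom b c p.-1 1 - b
      else
        (k + 1) * gtrinom b c p.-1 (k - 1)
        - (k - 1) * c * gtrinom b c p.-1 (k + 1))
   %[mod p%:Z])%Z.
Proof.
move=> p_pr _ /andP[k_ge k_le]; have p_gt1 := prime_gt1 p_pr.
set n := p.-2; have p_def : p = n.+2 by rewrite /n; lia.
rewrite (_ : p.-1 = n.+1); last by rewrite p_def.
set j := absz (n%:Z + k); have j_def : n%:Z + k = j%:Z by rewrite /j gez0_abs //; lia.
have j_le : (j <= n.*2)%N by rewrite -addnn; lia.
have k_Fp : k%:~R = j.+2%:R :> 'F_p.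
  have -> : k = j.+2%:Z - p%:Z by lia.
  by rewrite rmorphB /= -!pmulrn (pchar_Fp_0 p_pr) subr0.
apply/eqP; rewrite eqz_mod_Fp //; apply/eqP.
rewrite !(rmorphM, rmorphB, rmorphXn) /= (gtrinom_coef j_def).
rewrite (_ : 4%:~R = 4 :> 'F_p) // (trinomial_coef_Fp _ _ p_pr p_def j_le) -k_Fp.
case: (k =P 0) => [k0 | /eqP k_neq0].
- have -> : j = n by apply/eqP; rewrite -eqz_nat; lia.
  rewrite k0 eqxx !(rmorphB, rmorphD, rmorphM) /=.
  rewrite rmorph0 (gtrinom_coef (k := -1) (i := n)) ?(gtrinom_coef (k := 1) (i := n.+2));
    [ring | lia ..].
- have -> : (j == n) = false by apply/eqP => j_n; move: k_neq0; lia.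
  rewrite subr0 !(rmorphB, rmorphD, rmorphM) /= rmorph1.
  by rewrite (gtrinom_coef (k := k - 1) (i := j)) ?(gtrinom_coef (k := k + 1) (i := j.+2)) //;
    lia.
Qed.
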